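(* Let $G=\bigcap_{i\in\mathcal I}G_i$ be a nonempty bounded domain in $\mathbb R^d$, where $\mathcal I$ is a nonempty finite index set and each $G_i$ is a nonempty domain. Then the function $D:[0,\infty)\to[0,\infty]$ defined by $D(0)=0$ and, for $r>0$, $$D(r)=\sup_{\emptyset\ne\mathcal J\subset\mathcal I}\sup\Big\{\mathrm{dist}\Big(x,\bigcap_{j\in\mathcal J}(\partial G_j\cap\partial G)\Big):x\in\bigcap_{j\in\mathcal J}U_r(\partial G_j\cap\partial G)\Big\}$$ satisfies $D(r)\to0$ as $r\to0$.
   Context: $\mathrm{dist}(x,S)=\inf\{\|x-y\|:y\in S\}$ with $\mathrm{dist}(x,\emptyset)=\infty$; for $r>0$, $U_r(S)=\{x\in\mathbb R^d:\mathrm{dist}(x,S)\le r\}$, with $U_r(\emptyset)=\emptyset$; the supremum over an empty set is $0$. *)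

(* R^d is 'rV[R]_d over R : realType, with its
   (product = Euclidean) topology; the norm ||.|| is the Euclidean norm. *)
From HB Require Import structures.
From mathcomp Require Import all_boot all_order all_algebra.
From mathcomp Require Import all_classical all_reals all_analysis.
Set Implicit Arguments. Unset Strict Implicit. Unset Printing Implicit Defensive.
Import Order.TTheory GRing.Theory Num.Theory.
Import numFieldNormedType.Exports.
Local Open Scope classical_set_scope.
Local Open Scope ring_scope.

Section Defs.
Variables (R : realType) (d : nat).
Local Notation V := 'rV[R]_d.

Definition enorm (x : V) : R := Num.sqrt (\sum_(i < d) x 0 i ^+ 2).

Definition boundary (A : set V) : set V := closure A `\` interior A.

Definition domain (A : set V) : Prop := [/\ A !=set0, open A & connected A].

Definition ebounded (A : set V) : Prop := exists M : R, forall x, A x -> enorm x <= M.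

(* dist(x,S) = inf {||x-y|| : y in S}, = +oo for S empty *)
Definition dist (x : V) (S : set V) : \bar R :=
  ereal_inf [set (enorm (x - y))%:E | y in S].

(* U_r(S) = {x | dist(x,S) <= r}  (empty when S is empty) *)
Definition Unbhd (r : R) (S : set V) : set V := [set x | (dist x S <= r%:E)%E].

Definition sup0 (S : set (\bar R)) : \bar R :=
  if pselect (S = set0) then 0%E else ereal_sup S.

(* the function D of the statement; D(r) = 0 for r <= 0 (only r >= 0 matters) *)
Definition Dfun (I : finType) (Gi : I -> set V) (r : R) : \bar R :=
  let G := \bigcap_(i in [set: I]) Gi i in
  let B := fun j => boundary (Gi j) `&` boundary G in
  if r <= 0 then 0%E else
  sup0 [set sup0 [set dist x (\bigcap_(j in J) B j) | x in
                     \bigcap_(j in J) Unbhd r (B j)]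
       | J in [set J : set I | J !=set0]].
End Defs.

From Pilot Require Import Defs.
From HB Require Import structures.
From mathcomp Require Import all_boot all_order all_algebra.
From mathcomp Require Import all_classical all_reals all_analysis.
From mathcomp Require Import ring lra.
Set Implicit Arguments. Unset Strict Implicit. Unset Printing Implicit Defensive.
Import Order.TTheory GRing.Theory Num.Theory.
Import numFieldNormedType.Exports.
Local Open Scope classical_set_scope.
Local Open Scope ring_scope.

(* Only the boundedness of G matters: the sets B_j = dG_j /\ dG are closed
   subsets of the compact closure of G.  For one nonempty family J, a point of
   B_j0 near which no point of K = /\_(j in J) B_j lies is bounded away from
   some B_j, so by compactness of B_j0 every point that is r-close to all the
   B_j with r small enough is eps-close to K.  There are finitely many J. *)

Lemma sum_mul_sqr_le (R : realFieldType) (n : nat) (a b : 'I_n -> R) :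
  (\sum_i a i * b i) ^+ 2 <= (\sum_i a i ^+ 2) * (\sum_i b i ^+ 2).
Proof.
set A := \sum_i a i ^+ 2; set B := \sum_i b i ^+ 2; set C := \sum_i a i * b i.
have B0 : 0 <= B by apply: sumr_ge0 => i _; exact: sqr_ge0.
have [Bz|Bneq0] := eqVneq B 0.
  have b0 i : b i = 0.
    apply/eqP; rewrite -sqrf_eq0; apply/eqP.
    move/eqP: Bz; rewrite psumr_eq0; last by move=> j _; exact: sqr_ge0.
    by move=> /allP /(_ i (mem_index_enum _)) /eqP.
  have -> : C = 0 by rewrite /C big1 // => i _; rewrite b0 mulr0.
  by rewrite Bz expr0n /= mulr0.
(* the discriminant argument, with the minimizing combination B a - C b *)
have : 0 <= \sum_i (B * a i - C * b i) ^+ 2.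
  by apply: sumr_ge0 => i _; exact: sqr_ge0.
have -> : \sum_i (B * a i - C * b i) ^+ 2 = B * (A * B - C ^+ 2).
  rewrite (eq_bigr (fun i => B ^+ 2 * a i ^+ 2 - (2 * B * C) * (a i * b i)
                             + C ^+ 2 * b i ^+ 2)); last by move=> i _; ring.
  by rewrite big_split /= sumrB -!mulr_sumr -/A -/B -/C; ring.
by rewrite pmulr_rge0 ?lt_def ?Bneq0 // subr_ge0 mulrC.
Qed.

Section EuclideanNorm.
Variables (R : realType) (d : nat).
Local Notation V := 'rV[R]_d.

Lemma enorm_ge0 (x : V) : 0 <= enorm x.
Proof. exact: sqrtr_ge0. Qed.

Lemma enorm0 : enorm (0 : V) = 0.
Proof. by rewrite /enorm big1 ?sqrtr0 // => i _; rewrite mxE expr0n. Qed.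

Lemma sum_sqr_ge0 (x : V) : 0 <= \sum_(i < d) x 0 i ^+ 2.
Proof. by apply: sumr_ge0 => i _; exact: sqr_ge0. Qed.

Lemma enormD (a b : V) : enorm (a + b) <= enorm a + enorm b.
Proof.
rewrite /enorm.
set A := \sum_(i < d) a 0 i ^+ 2; set B := \sum_(i < d) b 0 i ^+ 2.
have A0 : 0 <= A := sum_sqr_ge0 a.
have B0 : 0 <= B := sum_sqr_ge0 b.
rewrite -[leRHS]ger0_norm ?addr_ge0 ?sqrtr_ge0 // -sqrtr_sqr ler_sqrt ?sqr_ge0 //.
have -> : \sum_(i < d) (a + b) 0 i ^+ 2 = A + 2 * (\sum_i a 0 i * b 0 i) + B.
  rewrite (eq_bigr (fun i => a 0 i ^+ 2 + 2 * (a 0 i * b 0 i) + b 0 i ^+ 2)).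
    by rewrite !big_split /= -mulr_sumr.
  by move=> i _; rewrite !mxE; ring.
have CS : \sum_i a 0 i * b 0 i <= Num.sqrt A * Num.sqrt B.
  apply: le_trans (ler_norm _) _.
  rewrite -sqrtr_sqr -sqrtrM // ler_sqrt ?mulr_ge0 //.
  exact: sum_mul_sqr_le.
rewrite sqrrD !sqr_sqrtr //; lra.
Qed.

Lemma enormB (a b : V) : enorm (a - b) = enorm (b - a).
Proof.
by rewrite -opprB /enorm; congr Num.sqrt; apply: eq_bigr => i _; rewrite mxE sqrrN.
Qed.

Lemma enorm_split (a b c : V) : enorm (a - c) <= enorm (a - b) + enorm (b - c).
Proof. have -> : a - c = (a - b) + (b - c) by rewrite addrA subrK.
exact: enormD.
Qed.

Lemma normr_coord_le (x : V) i : `|x 0 i| <= `|x|.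
Proof.
rewrite [`|x|]mx_normrE.
exact: (le_bigmax _ (fun ij : 'I_1 * 'I_d => `|x ij.1 ij.2|) (0, i)).
Qed.

Lemma normr_le_enorm (x : V) : `|x| <= enorm x.
Proof.
rewrite [`|x|]mx_normrE; apply: bigmax_le; first exact: enorm_ge0.
move=> [i j] _ /=; rewrite (ord1 i) /enorm -sqrtr_sqr ler_sqrt ?sum_sqr_ge0 //.
by rewrite (bigD1 j) //= lerDl; apply: sumr_ge0 => k _; exact: sqr_ge0.
Qed.

Lemma enorm_le_normr (x : V) : enorm x <= d%:R * `|x|.
Proof.
rewrite -[leRHS]ger0_norm ?mulr_ge0 // -sqrtr_sqr /enorm ler_sqrt ?sqr_ge0 //.
apply: le_trans (_ : \sum_(i < d) `|x| ^+ 2 <= _).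
  apply: ler_sum => i _; rewrite -real_normK ?num_real //.
  by rewrite lerXn2r ?nnegrE // normr_coord_le.
rewrite sumr_const card_ord -mulr_natl exprMn.
have : d%:R = 0 :> R \/ 1 <= d%:R :> R by case: (d) => [|n]; [left|right; rewrite ler1n].
have : 0 <= `|x| ^+ 2 := sqr_ge0 _.
nra.
Qed.

Lemma open_enorm_ball (y : V) (e : R) : open [set z | enorm (z - y) < e].
Proof.
rewrite openE => z /= zy; apply/nbhs_ballP.
have d1 : 0 < d%:R + 1 :> R by rewrite ltr_wpDl.
exists ((e - enorm (z - y)) / (d%:R + 1)); first by rewrite /= divr_gt0 ?subr_gt0.
move=> w; rewrite -ball_normE /= ltr_pdivlMr // mulrDr mulr1 mulrC => zw.
have := enorm_le_normr (z - w); have := enorm_split w z y; rewrite [enorm (w - z)]enormB.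
have : 0 <= `|z - w| by [].
lra.
Qed.

Lemma bounded_closure_normr (A : set V) (M : R) :
  (forall x, A x -> enorm x <= M) -> forall x, closure A x -> `|x| <= M + 1.
Proof.
move=> AM x /(_ (ball x 1) (nbhsx_ballx _ _ ltr01)) [g [Ag]].
rewrite -ball_normE /= => xg.
rewrite -[x](subrK g); apply: le_trans (ler_normD _ _) _; rewrite addrC.
by apply: lerD; [exact: le_trans (normr_le_enorm g) (AM g Ag)|exact: ltW].
Qed.

Lemma compact_sub_closure (A C : set V) (M : R) :
  (forall x, A x -> enorm x <= M) -> closed C -> C `<=` closure A -> compact C.
Proof.
move=> AM cC CA; apply: bounded_closed_compact => //.
exists (M + 1); split; first exact: num_real.
move=> N MN y Cy /=; apply: le_trans (ltW MN).
exact: bounded_closure_normr AM y (CA y Cy).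
Qed.

Lemma closed_boundary (A : set V) : closed (boundary A).
Proof.
by rewrite /boundary setDE; apply: closedI; [exact: closed_closure|
   exact: open_closedC (@open_interior _ A)].
Qed.

End EuclideanNorm.

Section Distance.
Variables (R : realType) (d : nat).
Local Notation V := 'rV[R]_d.
Local Open Scope ereal_scope.

Lemma dist_le_enorm (x : V) (S : set V) y : S y -> dist x S <= (enorm (x - y))%:E.
Proof. by move=> Sy; apply: ge_ereal_inf; exists (enorm (x - y))%:E => //; exists y. Qed.

Lemma dist_ge0 (x : V) (S : set V) : 0 <= dist x S.
Proof. by apply/ereal_infP => _ [y Sy <-]; rewrite lee_fin enorm_ge0. Qed.

Lemma dist_ltP (x : V) (S : set V) (c : R) :
  dist x S < c%:E -> exists2 y, S y & (enorm (x - y) < c)%R.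
Proof. by move=> /ereal_inf_lt [_ [y Sy <-]]; rewrite lte_fin; exists y. Qed.

Lemma dist_le_enormD (z x : V) (S : set V) :
  dist z S <= (enorm (z - x))%:E + dist x S.
Proof.
rewrite -leeBlDl //; apply/ereal_infP => _ [b Sb <-].
rewrite leeBlDl // -EFinD; apply: le_trans (dist_le_enorm z Sb) _.
by rewrite lee_fin enorm_split.
Qed.

Lemma closed_dist_gt0 (S : set V) (y : V) : closed S -> ~ S y ->
  exists2 e : R, (0 < e)%R & forall z, ball y e z -> e%:E <= dist z S.
Proof.
move=> cS Sy; have : nbhs y (~` S) by apply: open_nbhs_nbhs; split => //; exact: closed_openC.
move=> /nbhs_ballP [e e0 yS]; exists (e / 2)%R; first by rewrite divr_gt0.
move=> z; rewrite -ball_normE /= => yz; apply/ereal_infP => _ [b Sb <-].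
rewrite lee_fin leNgt; apply/negP => zb; apply: (yS b) => //.
rewrite -ball_normE /= -[y](subrK z) -addrA (splitr e).
apply: le_lt_trans (ler_normD _ _) _; rewrite ltrD //.
exact: le_lt_trans (normr_le_enorm _) zb.
Qed.

End Distance.

Lemma uniform_pos_seq (R : realDomainType) (T : eqType) (s : seq T) (P : T -> R -> Prop) :
  (forall t a b, 0 < a -> a <= b -> P t b -> P t a) ->
  (forall t, t \in s -> exists2 a, 0 < a & P t a) ->
  exists2 a, 0 < a & forall t, t \in s -> P t a.
Proof.
move=> Pdown; elim: s => [|x s IHs] Ps; first by exists 1.
have [a a0 Pa] := Ps x (mem_head _ _).
have [b b0 Pb] : exists2 b, 0 < b & forall t, t \in s -> P t b.
  by apply: IHs => t ts; apply: Ps; rewrite in_cons ts orbT.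
have ab0 : 0 < Num.min a b by rewrite lt_min a0 b0.
exists (Num.min a b) => // t; rewrite in_cons => /predU1P [->|ts].
  by apply: Pdown Pa; rewrite ?ge_min ?lexx.
by apply: Pdown (Pb t ts); rewrite ?ge_min ?lexx ?orbT.
Qed.

Section OneFamily.
Variables (R : realType) (d : nat) (I : Type) (J : set I) (B : I -> set 'rV[R]_d).
Variable eps : R.
Hypothesis closedB : forall j, closed (B j).
Hypothesis eps_gt0 : 0 < eps.
Local Notation K := (\bigcap_(j in J) B j).

Definition controlled (W : set 'rV[R]_d) (a : R) :=
  (exists2 k, K k & forall z, W z -> enorm (z - k) < eps / 2) \/
  (exists2 j, J j & forall z, W z -> (a%:E <= dist z (B j))%E).

Lemma controlled_le (W : set 'rV[R]_d) (a b : R) :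
  a <= b -> controlled W b -> controlled W a.
Proof.
move=> ab [Wk|[j Jj Wj]]; [by left|right; exists j => // z Wz].
by apply: le_trans (Wj z Wz); rewrite lee_fin.
Qed.

Lemma controlled_nbhs (y : 'rV[R]_d) :
  exists2 W, open W /\ W y & exists2 a, 0 < a & controlled W a.
Proof.
have [Ky|Ky] := pselect (K y).
  exists [set z | enorm (z - y) < eps / 2].
    by split; [exact: open_enorm_ball|rewrite /= subrr enorm0 divr_gt0].
  by exists 1 => //; left; exists y.
have [j Jj Bjy] : exists2 j, J j & ~ B j y.
  by apply: contrapT => nJ; apply: Ky => j Jj; apply: contrapT => Bj; apply: nJ; exists j.
have [e e0 ye] := closed_dist_gt0 (@closedB j) Bjy.
exists (ball y e); first by split; [exact: ball_open|exact: ballxx].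
by exists e => //; right; exists j.
Qed.

Lemma dist_bigcap_small (j0 : I) : J j0 -> compact (B j0) ->
  exists2 del : R, 0 < del & forall (r : R) (x : 'rV[R]_d), 0 < r -> r < del ->
    (forall j, J j -> (dist x (B j) <= r%:E)%E) -> (dist x K <= eps%:E)%E.
Proof.
move=> Jj0; rewrite compact_cover.
pose C := [set W | open W /\ exists2 a, 0 < a & controlled W a].
move=> /(_ _ C id) []; first by move=> W [].
  by move=> y _; have [W [oW Wy] aW] := controlled_nbhs y; exists W.
move=> C' C'C coverC'.
have [a a0 Ca] : exists2 a, 0 < a & forall W, W \in finmap.enum_fset C' -> controlled W a.
  apply: uniform_pos_seq => [W a b _|W /C'C]; first exact: controlled_le.
  by rewrite inE => -[_].
exists (Num.min (a / 3) (eps / 4)); first by rewrite lt_min !divr_gt0.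
move=> r x r0; rewrite lt_min => /andP [ra re] xB.
have [z Bz xz] : exists2 z, B j0 z & enorm (x - z) < 2 * r.
  by apply: dist_ltP; apply: le_lt_trans (xB _ Jj0) _; rewrite lte_fin; lra.
have [W WC' Wz] := coverC' z Bz.
have [[k Kk Wk]|[j Jj Wj]] := Ca W WC'.
  apply: le_trans (dist_le_enorm x Kk) _; rewrite lee_fin.
  by have := enorm_split x z k; have := Wk z Wz; lra.
(* z is at distance >= a > 3r from B_j, yet within 2r of x, which is r-close to B_j *)
exfalso; have : (a%:E <= (enorm (x - z))%:E + r%:E)%E.
  apply: le_trans (Wj z Wz) _; apply: le_trans (dist_le_enormD z x _) _.
  by rewrite enormB leeD2l // xB.
by rewrite -EFinD lee_fin; lra.
Qed.

End OneFamily.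

Section ExtendedReals.
Variable R : realType.
Local Open Scope ereal_scope.

Lemma sup0_le (S : set (\bar R)) c :
  0 <= c -> (forall y, S y -> y <= c) -> @Defs.sup0 R S <= c.
Proof.
by rewrite /Defs.sup0 => c0 Sc; case: (pselect (S = set0)) => [S0|S0] //; apply/ereal_supP.
Qed.

Lemma sup0_ge0 (S : set (\bar R)) : (forall y, S y -> 0 <= y) -> 0 <= @Defs.sup0 R S.
Proof.
rewrite /Defs.sup0 => S0; case: (pselect (S = set0)) => [//|Sn0].
have [y Sy] : S !=set0 by apply/set0P; apply/eqP.
by apply: le_ereal_sup_tmp; exists y => //; exact: S0.
Qed.

Lemma cvge0_squeeze (T : Type) (F : set_system T) {FF : Filter F} (f : T -> \bar R) :
  (forall e : R, (0 < e)%R -> \forall t \near F, 0 <= f t <= e%:E) -> f @ F --> 0.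
Proof.
move=> fe; apply/fine_cvgP; split.
  apply: filterS (fe 1%R ltr01) => t /andP [f0 f1].
  by rewrite ge0_fin_numE ?(le_lt_trans f1) ?ltry.
apply/cvgrPdist_le => e e0; apply: filterS (fe e e0) => t /andP [f0 fe'].
have ft : f t \is a fin_num by rewrite ge0_fin_numE ?(le_lt_trans fe') ?ltry.
rewrite -(fineK ft) !lee_fin in f0 fe'.
by rewrite /= sub0r normrN ger0_norm.
Qed.

End ExtendedReals.

Lemma Dfun_small (R : realType) (d : nat) (I : finType) (Gi : I -> set 'rV[R]_d) :
  let B j := boundary (Gi j) `&` boundary (\bigcap_(i in [set: I]) Gi i) in
  (forall j, compact (B j)) -> forall eps : R, 0 < eps ->
  exists2 del : R, 0 < del & forall r, 0 < r -> r < del -> (0 <= Dfun Gi r <= eps%:E)%E.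
Proof.
move=> B cptB eps eps0.
have closedB j : closed (B j) by apply: closedI; exact: closed_boundary.
pose P (F : {set I}) (a : R) := (exists j0, j0 \in F) -> forall (r : R) x, 0 < r -> r < a ->
  (forall j, j \in F -> (dist x (B j) <= r%:E)%E) ->
  (dist x (\bigcap_(j in [set j | j \in F]) B j) <= eps%:E)%E.
have [del del0 delP] : exists2 a, 0 < a & forall F, F \in enum {set I} -> P F a.
  apply: uniform_pos_seq => [F a b a0 ab PF Fn r x r0 ra|F _].
    by apply: PF => //; exact: lt_le_trans ab.
  have [[j0 Fj0]|Fn] := pselect (exists j0, j0 \in F); last by exists 1 => // /Fn.
  have [a a0 Pa] := dist_bigcap_small (J := [set j | j \in F]) closedB eps0 Fj0 (cptB j0).
  by exists a => // _; exact: Pa.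
exists del => // r r0 rdel; rewrite /Dfun /= (lt_geF r0); apply/andP; split.
  by apply: sup0_ge0 => _ [J _ <-]; apply: sup0_ge0 => _ [x _ <-]; exact: dist_ge0.
apply: sup0_le => [|_ [J [j0 Jj0] <-]]; first by rewrite lee_fin ltW.
apply: sup0_le => [|_ [x Jx <-]]; first by rewrite lee_fin ltW.
pose F : {set I} := finset (fun j => `[< J j >]).
have -> : J = [set j | j \in F] by apply/seteqP; split => j; rewrite /= inE asboolE.
apply: (delP F (mem_enum _ _) _ r x r0 rdel); first by exists j0; rewrite inE asboolE.
by move=> j Fj; apply: Jx; rewrite /= inE asboolE in Fj.
Qed.

Theorem lemmaA2 (R : realType) (d : nat) (I : finType) (Gi : I -> set 'rV[R]_d) :
  (0 < #|I|)%N ->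
  (forall i, domain (Gi i)) ->
  domain (\bigcap_(i in [set: I]) Gi i) ->
  ebounded (\bigcap_(i in [set: I]) Gi i) ->
  Dfun Gi r @[r --> 0^'+] --> 0%E.
Proof.
move=> _ _ _ [M GM].
have cptB j : compact (boundary (Gi j) `&` boundary (\bigcap_(i in [set: I]) Gi i)).
  apply: compact_sub_closure GM _ _ => [|x [_ []] //].
  by apply: closedI; exact: closed_boundary.
apply: cvge0_squeeze => e e0; have [del del0 delP] := Dfun_small cptB e0.
near=> r; apply: delP; near: r; [exact: nbhs_right_gt|exact: nbhs_right_lt].
Unshelve. all: by end_near.
Qed.
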